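(* In the worst case, the number of rounds until the myopic best-response dynamics described below converge is $\Omega(n)$: there is a constant $c>0$ such that for every $n$ there is an instance with $n$ users (nonnegative embedding weights, features, linear threshold classifier, scaled 2-norm cost) for which the dynamics require at least $cn$ rounds to converge.
   Context: Users $i$ have features $x_i\in\mathbb{R}^\ell$; embeddings $\phi(x_i;x_{-i})=\widetilde{w}_{ii}x_i+\sum_{j\neq i}\widetilde{w}_{ji}x_j$ with $\widetilde{w}_{ji}\ge0$. Classifier: $h_{\theta,b}(x_i;x_{-i})=\mathrm{sign}(\theta^\top\phi(x_i;x_{-i})+b)$, $\mathrm{sign}(0)=+1$. Cost $c_\beta(x,x')=\beta\|x-x'\|_2$, $\beta>0$. Dynamics: $x_i^{(0)}=x_i$; at each round all users update concurrently; user $i$ changes her features only if she is currently classified $-1$ and some $x'$ with $h(x';x_{-i})=+1$ (others' current features) has cost $\le2$ from her current features, in which case she moves to the minimum-cost such point; otherwise she stays. Convergence means reaching a round after which no user's features change. *)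

From mathcomp Require Import all_boot all_order all_algebra.
From mathcomp Require Import reals.
Set Implicit Arguments. Unset Strict Implicit. Unset Printing Implicit Defensive.
Import Order.TTheory GRing.Theory Num.Theory.
Local Open Scope ring_scope.

Section Strategic.
Variable R : realType.

Definition feat (l : nat) := 'I_l -> R.
Definition profile (n l : nat) := 'I_n -> feat l.

Definition dotp (l : nat) (u v : feat l) : R := \sum_(k < l) u k * v k.

(* embedding phi(x_i; x_{-i}) = sum_j w j i x_j, where w j i is \tilde w_{ji}
   (the j = i term is \tilde w_{ii} x_i) *)
Definition embed (n l : nat) (w : 'I_n -> 'I_n -> R) (x : profile n l) (i : 'I_n)
  : feat l := fun k => \sum_(j < n) w j i * x j k.

(* h_{theta,b} = +1 iff theta^T phi + b >= 0 (sign 0 = +1) *)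
Definition positive (n l : nat) (w : 'I_n -> 'I_n -> R) (theta : feat l) (b : R)
  (x : profile n l) (i : 'I_n) : Prop := 0 <= dotp theta (embed w x i) + b.

Definition replace (n l : nat) (x : profile n l) (i : 'I_n) (x' : feat l)
  : profile n l := fun j => if j == i then x' else x j.

Definition cost (l : nat) (beta : R) (x x' : feat l) : R :=
  beta * Num.sqrt (\sum_(k < l) (x k - x' k) ^+ 2).

Definition can_move (n l : nat) (w : 'I_n -> 'I_n -> R) (theta : feat l)
  (b beta : R) (x : profile n l) (i : 'I_n) : Prop :=
  not (positive w theta b x i) /\
  exists x', positive w theta b (replace x i x') i /\ cost beta (x i) x' <= 2.

Definition best_response (n l : nat) (w : 'I_n -> 'I_n -> R) (theta : feat l)
  (b beta : R) (x : profile n l) (i : 'I_n) (y : feat l) : Prop :=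
  (can_move w theta b beta x i ->
     positive w theta b (replace x i y) i /\
     (forall x', positive w theta b (replace x i x') i ->
        cost beta (x i) y <= cost beta (x i) x')) /\
  (not (can_move w theta b beta x i) -> y = x i).

(* one round: all users update concurrently *)
Definition step (n l : nat) (w : 'I_n -> 'I_n -> R) (theta : feat l)
  (b beta : R) (x x' : profile n l) : Prop :=
  forall i, best_response w theta b beta x i (x' i).

Definition is_run (n l : nat) (w : 'I_n -> 'I_n -> R) (theta : feat l)
  (b beta : R) (x0 : profile n l) (traj : nat -> profile n l) : Prop :=
  traj 0%N = x0 /\ forall t, step w theta b beta (traj t) (traj t.+1).

Definition stable_from (n l : nat) (traj : nat -> profile n l) (T : nat) : Prop :=
  forall t i, (T <= t)%N -> traj t i = traj T i.

Definition converges (n l : nat) (traj : nat -> profile n l) : Prop :=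
  exists T, stable_from traj T.
End Strategic.

(* The instance is one-dimensional with theta = 1, b = 0, beta = 1 and initial
   features -1 for everybody.  User i sees herself with weight 1 and every
   earlier user j < i with weight 2.  In round t the users i < t sit at 0 and
   the others at -1.  User t then only needs to raise her own feature from -1
   to 0 (cost 1), whereas every later user still sees user t at -1 through a
   weight 2, so she would have to move to at least 2, at cost at least 3 > 2.
   Hence exactly one user moves per round and the dynamics take n rounds. *)

From mathcomp Require Import all_boot all_order all_algebra.
From mathcomp Require Import reals.
From mathcomp Require Import lra.
From Stdlib Require Import FunctionalExtensionality.
Set Implicit Arguments. Unset Strict Implicit. Unset Printing Implicit Defensive.
Import Order.TTheory GRing.Theory Num.Theory.
Local Open Scope ring_scope.

Section BestResponse.
Variables (R : realType) (n l : nat) (w : 'I_n -> 'I_n -> R).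
Variables (theta : feat R l) (b beta : R) (x : profile R n l) (i : 'I_n).

Lemma best_response_stuck y :
  ~ can_move w theta b beta x i -> best_response w theta b beta x i y <-> y = x i.
Proof.
move=> stuck; split; first by case=> _; apply.
by move=> ->; split=> // /stuck.
Qed.

Lemma best_response_moving y :
  can_move w theta b beta x i ->
  best_response w theta b beta x i y <->
  positive w theta b (replace x i y) i /\
  (forall x', positive w theta b (replace x i x') i ->
     cost beta (x i) y <= cost beta (x i) x').
Proof.
move=> mv; split; first by case=> /(_ mv).
by move=> opt; split=> // /(_ mv).
Qed.

End BestResponse.

Section OneDimensional.
Variables (R : realType) (n : nat) (w : 'I_n -> 'I_n -> R).

Definition ones : feat R 1 := fun _ => 1.

Definition others_score (x : profile R n 1) (i : 'I_n) : R :=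
  \sum_(j | j != i) w j i * x j ord0.

Lemma feat1_eq (y z : feat R 1) : y ord0 = z ord0 -> y = z.
Proof. by move=> yz; apply: functional_extensionality => k; rewrite (ord1 k). Qed.

Lemma cost_dim1 beta (y z : feat R 1) : cost beta y z = beta * `|y ord0 - z ord0|.
Proof. by rewrite /cost big_ord1 sqrtr_sqr. Qed.

Lemma positive_ones x i :
  positive w ones 0 x i <-> 0 <= w i i * x i ord0 + others_score x i.
Proof.
by rewrite /positive addr0 /dotp big_ord1 /ones mul1r /embed (bigD1 i).
Qed.

Lemma others_score_replace x i y : others_score (replace x i y) i = others_score x i.
Proof. by apply: eq_bigr => j /negbTE ji; rewrite /replace ji. Qed.

Lemma positive_ones_replace x i y :
  positive w ones 0 (replace x i y) i <-> 0 <= w i i * y ord0 + others_score x i.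
Proof. by rewrite positive_ones others_score_replace /replace eqxx. Qed.

End OneDimensional.

Section Staircase.
Variables (R : realType) (n : nat).

Definition chain_weight (j i : 'I_n) : R :=
  if j == i then 1 else if (j < i)%N then 2 else 0.

Definition staircase (t : nat) : profile R n 1 :=
  fun i _ => if (i < t)%N then 0 else -1.

Local Notation score := (others_score chain_weight).
Local Notation best_resp := (best_response chain_weight (ones R) 0 1).

Lemma chain_weight_ge0 j i : 0 <= chain_weight j i.
Proof. by rewrite /chain_weight; case: ifP => _; last case: ifP => _; lra. Qed.

Lemma chain_weight_diag i : chain_weight i i = 1.
Proof. by rewrite /chain_weight eqxx. Qed.

Lemma score_settled t (i : 'I_n) : (i <= t)%N -> score (staircase t) i = 0.
Proof.
move=> it; apply: big1 => j /negbTE ji; rewrite /chain_weight ji /staircase.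
by case: ifP => [/leq_trans/(_ it) -> | _]; rewrite ?mulr0 ?mul0r.
Qed.

Lemma score_blocked t (i : 'I_n) : (t < i)%N -> score (staircase t) i <= -2.
Proof.
move=> ti; have tn : (t < n)%N := ltn_trans ti (ltn_ord i).
have ti' : Ordinal tn != i by rewrite -val_eqE /= neq_ltn ti.
rewrite /others_score (bigD1 (Ordinal tn)) //=.
have -> : chain_weight (Ordinal tn) i * staircase t (Ordinal tn) ord0 = -2.
  by rewrite /chain_weight (negbTE ti') ti /staircase /= ltnn; lra.
suff : \sum_(j | (j != i) && (j != Ordinal tn))
         chain_weight j i * staircase t j ord0 <= 0 by lra.
apply: sumr_le0 => j _; apply: mulr_ge0_le0; first exact: chain_weight_ge0.
by rewrite /staircase; case: ifP => _; lra.
Qed.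

Lemma best_response_settled t (i : 'I_n) y :
  (i < t)%N -> best_resp (staircase t) i y <-> y = staircase t.+1 i.
Proof.
move=> it; have -> : staircase t.+1 i = staircase t i.
  by rewrite /staircase it ltnS (ltnW it).
apply: best_response_stuck; case=> + _; apply; apply/positive_ones.
by rewrite score_settled ?(ltnW it) // /staircase it; lra.
Qed.

Lemma best_response_active t (i : 'I_n) y :
  val i = t -> best_resp (staircase t) i y <-> y = staircase t.+1 i.
Proof.
move=> it; have s0 : score (staircase t) i = 0 by rewrite score_settled ?it.
have xi : staircase t i ord0 = -1 by rewrite /staircase it ltnn.
have -> : staircase t.+1 i = (fun _ => 0) by rewrite /staircase it ltnSn.
have pos_iff y' : positive chain_weight (ones R) 0 (replace (staircase t) i y') i
                  <-> 0 <= y' ord0.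
  by rewrite positive_ones_replace chain_weight_diag s0 mul1r addr0.
have cost_pos y' : 0 <= y' ord0 -> cost 1 (staircase t i) y' = 1 + y' ord0.
  by move=> y'0; rewrite cost_dim1 xi mul1r ler0_norm; lra.
have reach0 : positive chain_weight (ones R) 0 (replace (staircase t) i (fun _ => 0)) i.
  by apply/pos_iff.
rewrite best_response_moving; last first.
  split; first by move/positive_ones; rewrite chain_weight_diag s0 xi; lra.
  by exists (fun _ => 0); split; last by rewrite cost_pos //; lra.
split=> [[/pos_iff y0 /(_ _ reach0)] | ->].
  by rewrite !cost_pos // => le1; apply: feat1_eq; lra.
split=> // y' /pos_iff y'0; rewrite !cost_pos //; lra.
Qed.

Lemma best_response_blocked t (i : 'I_n) y :
  (t < i)%N -> best_resp (staircase t) i y <-> y = staircase t.+1 i.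
Proof.
move=> ti; have xi : staircase t i ord0 = -1 by rewrite /staircase ltnNge (ltnW ti).
have -> : staircase t.+1 i = staircase t i by rewrite /staircase ltnNge ti ltnNge (ltnW ti).
have sc := score_blocked ti.
apply: best_response_stuck => -[_ [y' [/positive_ones_replace pos le2]]].
rewrite chain_weight_diag mul1r in pos.
by move: le2; rewrite cost_dim1 xi mul1r ler0_norm; lra.
Qed.

Lemma best_response_staircase t (i : 'I_n) y :
  best_resp (staircase t) i y <-> y = staircase t.+1 i.
Proof.
case: (ltngtP i t) => [it|ti|it]; [exact: best_response_settled |
  exact: best_response_blocked | exact: best_response_active].
Qed.

Lemma staircase_is_run :
  is_run chain_weight (ones R) 0 1 (staircase 0) staircase.
Proof. by split=> // t i; apply/(best_response_staircase t i _).2. Qed.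

Lemma run_eq_staircase traj :
  is_run chain_weight (ones R) 0 1 (staircase 0) traj -> forall t, traj t = staircase t.
Proof.
case=> traj0 traj_step; elim=> // t IH; apply: functional_extensionality => i.
by apply/(best_response_staircase t i _).1; rewrite -IH; apply: traj_step.
Qed.

Lemma staircase_stable : stable_from staircase n.
Proof.
move=> t i nt; apply: functional_extensionality => k.
by rewrite /staircase ltn_ord (leq_trans (ltn_ord i) nt).
Qed.

Lemma staircase_unstable T : (T < n)%N -> ~ stable_from staircase T.
Proof.
move=> Tn /(_ n (Ordinal Tn) (ltnW Tn)) /(congr1 (fun y => y ord0)).
rewrite /staircase /= Tn ltnn; lra.
Qed.

End Staircase.

Theorem corollary2 (R : realType) :
  exists c : R, 0 < c /\
  forall n : nat, exists (l : nat) (w : 'I_n -> 'I_n -> R) (x0 : profile R n l)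
    (theta : feat R l) (b beta : R),
    0 < beta /\ (forall j i, 0 <= w j i) /\
    (exists traj, is_run w theta b beta x0 traj) /\
    (forall traj, is_run w theta b beta x0 traj ->
       converges traj /\
       (forall T : nat, stable_from traj T -> c * n%:R <= T%:R)).
Proof.
exists 1; split; first exact: ltr01.
move=> n; exists 1%N, (@chain_weight R n), (@staircase R n 0), (ones R), 0, 1.
split; first exact: ltr01.
split; first exact: chain_weight_ge0.
split; first by exists (@staircase R n); apply: staircase_is_run.
move=> traj /run_eq_staircase traj_eq.
have -> : traj = @staircase R n by apply: functional_extensionality.
split; first by exists n; apply: staircase_stable.
move=> T stT; rewrite mul1r ler_nat leqNgt; apply/negP => Tn.
exact: staircase_unstable Tn stT.
Qed.
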